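(* For every integer $r\ge 2$, the rightmost point of $P_r$ lies above the line $\ell_{r-1}$, and the leftmost point of $P_r$ lies below the line $\ell_{r-1}'$.
   Context: Define finite sets $P_r\subset\mathbb{Z}^2$ for integers $r\ge 0$ recursively: $P_0:=\{(0,0)\}$; for $r\ge 1$, $L_r:=P_{r-1}$, $R_r:=\{(x+\delta_r,\,y+\delta_r'):(x,y)\in L_r\}$ and $P_r:=L_r\cup R_r$, where $\delta_r:=3\cdot 4^{r-1}$ and $\delta_r':=(3r+1)\cdot 4^{r-1}$. For $r\ge 1$, let $\ell_r$ be the straight line through the rightmost point (largest $x$-coordinate) of $L_r$ and the leftmost point (smallest $x$-coordinate) of $R_r$. For $r\ge 2$, $R_r$ is the translate of $P_{r-1}=L_{r-1}\cup R_{r-1}$ by the vector $(\delta_r,\delta_r')$; let $\ell_{r-1}'$ denote the translate of the line $\ell_{r-1}$ by $(\delta_r,\delta_r')$. *)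

From mathcomp Require Import all_boot all_order all_algebra.
Set Implicit Arguments. Unset Strict Implicit. Unset Printing Implicit Defensive.
Import Order.TTheory GRing.Theory Num.Theory.
Local Open Scope ring_scope.

Definition pt := (int * int)%type.

Definition delta (r : nat) : int := (3 * 4 ^ (r.-1))%N%:Z.
Definition delta' (r : nat) : int := ((3 * r + 1) * 4 ^ (r.-1))%N%:Z.

Definition shift (r : nat) (p : pt) : pt := (p.1 + delta r, p.2 + delta' r).

Fixpoint P (r : nat) : seq pt :=
  match r with
  | 0%N => [:: (0, 0)]
  | r'.+1 => P r' ++ map (shift r'.+1) (P r')
  end.

Definition L (r : nat) : seq pt := P r.-1.
Definition R (r : nat) : seq pt := map (shift r) (P r.-1).

Definition is_rightmost (S : seq pt) (p : pt) : Prop :=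
  p \in S /\ forall q, q \in S -> q.1 <= p.1.
Definition is_leftmost (S : seq pt) (p : pt) : Prop :=
  p \in S /\ forall q, q \in S -> p.1 <= q.1.

Definition ratI (z : int) : rat := z%:~R.

Definition line_at (a b : pt) (x : int) : rat :=
  ratI a.2 + (ratI b.2 - ratI a.2) / (ratI b.1 - ratI a.1) * (ratI x - ratI a.1).

Definition above_line (a b p : pt) : Prop :=
  a.1 != b.1 /\ line_at a b p.1 < ratI p.2.
Definition below_line (a b p : pt) : Prop :=
  a.1 != b.1 /\ ratI p.2 < line_at a b p.1.

From mathcomp Require Import all_boot all_order all_algebra.
From mathcomp Require Import zify.
Set Implicit Arguments. Unset Strict Implicit.
Import Order.TTheory GRing.Theory Num.Theory.
Local Open Scope ring_scope.

(* All points of P_n have abscissa in [0, 4^n - 1]; the extreme abscissae are attained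
   only at (0, 0) and at (4^n - 1, n 4^n).  For r = k + 2 the line l_{r-1} thus passes
   through (4^k - 1, k 4^k) and (3 4^k, (3k + 4) 4^k), and both claims reduce, with
   m = 4^k, to polynomial inequalities in k and m, checked through the integer
   cross-product form of "above" and "below". *)

Definition Ptop (n : nat) : pt := ((4 ^ n)%N%:Z - 1, (n * 4 ^ n)%N%:Z).

Lemma P_abscissa_bounds n q : q \in P n -> 0 <= q.1 <= (4 ^ n)%N%:Z - 1.
Proof.
elim: n q => [|n IH] q /=; first by rewrite inE => /eqP ->.
rewrite mem_cat expnS => /orP[/IH | /mapP[[x y] /IH Hxy ->]].
  by case: q => x y /=; lia.
by move: Hxy; rewrite /shift /delta /=; lia.
Qed.

Lemma mem0_P n : (0, 0) \in P n.
Proof. by elim: n => [|n IH] //=; rewrite mem_cat IH. Qed.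

Lemma shift_Ptop n : shift n.+1 (Ptop n) = Ptop n.+1.
Proof. by rewrite /Ptop /shift /delta /delta' /= expnS; congr pair; nia. Qed.

Lemma mem_Ptop_P n : Ptop n \in P n.
Proof.
elim: n => [|n IH] //=; rewrite mem_cat -shift_Ptop.
by rewrite (map_f (shift n.+1) IH) orbT.
Qed.

Lemma P_abscissa_min n q : q \in P n -> q.1 = 0 -> q = (0, 0).
Proof.
elim: n q => [|n IH] q /=; first by rewrite inE => /eqP ->.
rewrite mem_cat => /orP[/IH // | /mapP[[x y] /P_abscissa_bounds Hxy ->]].
by move: Hxy; rewrite /shift /delta /=; lia.
Qed.

Lemma P_abscissa_max n q : q \in P n -> q.1 = (4 ^ n)%N%:Z - 1 -> q = Ptop n.
Proof.
elim: n q => [|n IH] q /=; first by rewrite inE => /eqP ->.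
rewrite mem_cat expnS => /orP[/P_abscissa_bounds | /mapP[[x y] Hxy ->]].
  by case: q => x y /=; lia.
move=> Hx; rewrite -shift_Ptop; congr shift; apply: IH => //=.
by move: Hx; rewrite /shift /delta /=; lia.
Qed.

Lemma rightmost_P n p : is_rightmost (P n) p -> p = Ptop n.
Proof.
case=> Pp maxp; apply: (P_abscissa_max Pp).
move: (maxp _ (mem_Ptop_P n)) (P_abscissa_bounds Pp).
by case: p {Pp maxp} => x y; rewrite /Ptop /=; lia.
Qed.

Lemma leftmost_P n p : is_leftmost (P n) p -> p = (0, 0).
Proof.
case=> Pp minp; apply: (P_abscissa_min Pp).
move: (minp _ (mem0_P n)) (P_abscissa_bounds Pp).
by case: p {Pp minp} => x y /=; lia.
Qed.

Lemma leftmost_map_shift r (S : seq pt) b :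
  is_leftmost (map (shift r) S) b -> exists2 q, is_leftmost S q & b = shift r q.
Proof.
case=> /mapP[q Sq ->] minb; exists q => //; split=> // q' Sq'.
by move: (minb _ (map_f (shift r) Sq')); rewrite lerD2r.
Qed.

Lemma above_line_cross (a b p : pt) : a.1 < b.1 ->
  (b.2 - a.2) * (p.1 - a.1) < (p.2 - a.2) * (b.1 - a.1) -> above_line a b p.
Proof.
move=> ab cross; split; first by rewrite lt_eqF.
have dx : 0 < ratI b.1 - ratI a.1 by rewrite subr_gt0 ltr_int.
rewrite /line_at -ltrBrDl mulrAC ltr_pdivrMr //.
by rewrite /ratI -!intrB -!intrM ltr_int.
Qed.

Lemma below_line_cross (a b p : pt) : a.1 < b.1 ->
  (p.2 - a.2) * (b.1 - a.1) < (b.2 - a.2) * (p.1 - a.1) -> below_line a b p.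
Proof.
move=> ab cross; split; first by rewrite lt_eqF.
have dx : 0 < ratI b.1 - ratI a.1 by rewrite subr_gt0 ltr_int.
rewrite /line_at -ltrBlDl mulrAC ltr_pdivlMr //.
by rewrite /ratI -!intrB -!intrM ltr_int.
Qed.

Lemma Ptop_above_line k :
  above_line (Ptop k) (shift k.+1 (0, 0)) (Ptop k.+2).
Proof.
have m_gt0 : (0 < 4 ^ k)%N by rewrite expn_gt0.
by apply: above_line_cross; rewrite /Ptop /shift /delta /delta' /= ?expnS; nia.
Qed.

Lemma origin_below_shifted_line k :
  below_line (shift k.+2 (Ptop k)) (shift k.+2 (shift k.+1 (0, 0))) (0, 0).
Proof.
have m_gt0 : (0 < 4 ^ k)%N by rewrite expn_gt0.
by apply: below_line_cross; rewrite /Ptop /shift /delta /delta' /= ?expnS; nia.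
Qed.

Theorem lemma2 (r : nat) (hr : (2 <= r)%N) (a b : pt) :
  is_rightmost (L r.-1) a -> is_leftmost (R r.-1) b ->
  (forall p, is_rightmost (P r) p -> above_line a b p) /\
  (forall p, is_leftmost (P r) p -> below_line (shift r a) (shift r b) p).
Proof.
case: r hr => [|[|k]] // _ /rightmost_P -> /leftmost_map_shift[q /leftmost_P -> ->].
split=> p.
- by move=> /rightmost_P ->; exact: Ptop_above_line.
- by move=> /leftmost_P ->; exact: origin_below_shifted_line.
Qed.
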